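(* (Euler's Homogeneous Theorem) Let $f$ be a function on the Cartesian $\mathbb Z_2^n$-manifold $\mathbb R^{p|\mathbf q}$ which is $\nabla^{p|\mathbf q}$-homogeneous of weight $1$, i.e. $\nabla^{p|\mathbf q}(f)=f$, where $\nabla^{p|\mathbf q}=\sum_a x^a\partial_{x^a}+\sum_\alpha\xi^\alpha\partial_{\xi^\alpha}$. Then there exist real numbers $F_a,G_\alpha\in\mathbb R$ such that $f=\sum_aF_ax^a+\sum_\alpha G_\alpha\xi^\alpha$.
   Context: Fix $n\ge 1$. The Cartesian $\mathbb Z_2^n$-manifold of dimension $p|\mathbf q$, $\mathbf q=(q_1,\dots,q_{2^n-1})$, is $\mathbb R^{p|\mathbf q}=(\mathbb R^p,C^\infty_{\mathbb R^p}[[\xi]])$, where $x^a$ are the standard linear coordinates on $\mathbb R^p$ (degree $0$) and $\xi^\alpha$ are formal coordinates, $q_i$ of them of the $i$-th non-zero degree in $\mathbb Z_2^n$, with $\xi^\alpha\xi^\beta=(-1)^{\langle\deg\xi^\alpha,\deg\xi^\beta\rangle}\xi^\beta\xi^\alpha$ ($\langle\cdot,\cdot\rangle$ the dot product mod 2; variables with odd self-pairing square to zero, the others generate formal power series). Functions on $\mathbb R^{p|\mathbf q}$ are global sections $f=\sum_{\boldsymbol\alpha}\xi^{\boldsymbol\alpha}f_{\boldsymbol\alpha}(x)$ (multi-index notation, $f_{\boldsymbol\alpha}$ smooth on $\mathbb R^p$). $\partial_{x^a}$ is the usual partial derivative acting on coefficients; $\partial_{\xi^\alpha}$ is the graded derivation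 with $\partial_{\xi^\alpha}\xi^\beta=\delta^\beta_\alpha$, extended by the graded Leibniz rule with signs $(-1)^{\langle\deg\xi^\alpha,\cdot\rangle}$. *)

From HB Require Import structures.
From mathcomp Require Import all_boot all_order all_algebra.
From mathcomp Require Import all_classical all_reals all_analysis.
Set Implicit Arguments. Unset Strict Implicit. Unset Printing Implicit Defensive.
Import Order.TTheory GRing.Theory Num.Theory.
Import numFieldNormedType.Exports.
Local Open Scope ring_scope.

Definition z2deg (n : nat) := {ffun 'I_n -> bool}.
Definition z2pair (n : nat) (u v : z2deg n) : nat :=
  odd (\sum_(i < n) ((u i && v i) : nat)).

(* N formal coordinates xi^0 ... xi^(N-1) with degrees deg : 'I_N -> z2deg n.
   A monomial xi^m = xi_0^(m 0) * ... * xi_(N-1)^(m (N-1)) (ordered product)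
   is given by an exponent vector m. *)
Definition expo (N : nat) := {ffun 'I_N -> nat}.
Definition expo0 (N : nat) : expo N := [ffun => 0%N].
Definition expo_unit (N : nat) (al : 'I_N) : expo N :=
  [ffun b => (b == al) : nat].
Definition expo_inc N (m : expo N) (al : 'I_N) : expo N :=
  [ffun b => if b == al then (m b).+1 else m b].
Definition expo_dec N (m : expo N) (al : 'I_N) : expo N :=
  [ffun b => if b == al then (m b).-1 else m b].

(* valid monomials: variables with odd self-pairing square to zero *)
Definition valid_expo n N (deg : 'I_N -> z2deg n) (m : expo N) : bool :=
  [forall al, (z2pair (deg al) (deg al) == 1%N) ==> (m al <= 1)%N].

(* parity of the Koszul sign obtained when moving xi^al (or d/dxi^al) from the
   left across the factors xi_b^(m b), b < al, of xi^m *)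
Definition ksign n N (deg : 'I_N -> z2deg n) (m : expo N) (al : 'I_N) : nat :=
  (\sum_(b < N | (b < al)%N) m b * z2pair (deg al) (deg b))%N.

Definition xcoord (R : realType) (p : nat) (a : 'I_p) (x : 'rV[R]_p) : R := x ord0 a.
Definition ebasis (R : realType) (p : nat) (a : 'I_p) : 'rV[R]_p := delta_mx ord0 a.
Definition dpartial (R : realType) (p : nat) (a : 'I_p) (g : 'rV[R]_p -> R)
  : 'rV[R]_p -> R := fun x => 'D_(ebasis R a) g x.
Fixpoint iter_partial (R : realType) (p : nat) (l : seq 'I_p) (g : 'rV[R]_p -> R)
  : 'rV[R]_p -> R :=
  match l with nil => g | a :: l' => dpartial a (iter_partial l' g) end.
Definition smooth (R : realType) (p : nat) (g : 'rV[R]_p -> R) : Prop :=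
  forall l : seq 'I_p, continuous (iter_partial l g) /\
    forall (a : 'I_p) (x : 'rV[R]_p), derivable (iter_partial l g) x (ebasis R a).

(* f = sum_m xi^m f_m(x), represented by its coefficient family m |-> f_m *)
Definition zfun (R : realType) (p N : nat) := expo N -> 'rV[R]_p -> R.

Definition is_zfun (R : realType) n p N (deg : 'I_N -> z2deg n) (f : zfun R p N)
  : Prop :=
  forall m, (valid_expo deg m -> smooth (f m)) /\ (~~ valid_expo deg m -> f m = fun _ => 0).

Definition x_dx (R : realType) p N (a : 'I_p) (f : zfun R p N) : zfun R p N :=
  fun m x => xcoord a x * dpartial a (f m) x.

(* d/dxi^al : graded derivation, d xi^b = delta, with Koszul signs *)
Definition dxi (R : realType) n p N (deg : 'I_N -> z2deg n) (al : 'I_N)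
  (f : zfun R p N) : zfun R p N :=
  fun m x => (-1) ^+ ksign deg m al * ((m al).+1)%:R * f (expo_inc m al) x.

Definition mul_xi (R : realType) n p N (deg : 'I_N -> z2deg n) (al : 'I_N)
  (f : zfun R p N) : zfun R p N :=
  fun m x => if (0 < m al)%N && valid_expo deg m
             then (-1) ^+ ksign deg m al * f (expo_dec m al) x else 0.

Definition euler (R : realType) n p N (deg : 'I_N -> z2deg n) (f : zfun R p N)
  : zfun R p N :=
  fun m x => \sum_(a < p) x_dx a f m x + \sum_(al < N) mul_xi deg al (dxi deg al f) m x.

Definition linear_zfun (R : realType) p N (F : 'I_p -> R) (G : 'I_N -> R)
  : zfun R p N :=
  fun m x => (if m == expo0 N then \sum_(a < p) F a * xcoord a x else 0)
             + \sum_(al < N) (if m == expo_unit al then G al else 0).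

(* Write f = sum_m xi^m f_m.  The Koszul signs of xi^al and d/dxi^al cancel, so the Euler field
   acts on the coefficient f_m as x.grad + |m|, and weight 1 means x.grad f_m = (1 - |m|) f_m.
   Along a ray, phi t = f_m (t x) then solves t phi' = (1 - |m|) phi; since phi is differentiable
   at 0, this forces phi t = t phi'(0) when |m| = 0, phi constant when |m| = 1 and phi = 0 when
   |m| >= 2.  Differentiating along rays uses the continuity of the partial derivatives. *)

From HB Require Import structures.
From mathcomp Require Import all_boot all_order all_algebra.
From mathcomp Require Import all_classical all_reals all_analysis.
From mathcomp Require Import ring zify.
Set Implicit Arguments. Unset Strict Implicit. Unset Printing Implicit Defensive.
Import Order.TTheory GRing.Theory Num.Theory.
Import numFieldNormedType.Exports.
Local Open Scope ring_scope.
Local Open Scope classical_set_scope.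

Lemma MVT_between {R : realType} (f df : R -> R) a b :
  (forall x, is_derive x (1 : R) f (df x)) ->
  exists c, `|c - a| <= `|b - a| /\ f b - f a = df c * (b - a).
Proof.
move=> df_f.
have cf x y : {within `[x, y], continuous f}.
  by apply: derivable_within_continuous => t _; case: (df_f t).
have [leab|ltba] := leP a b.
  have [c cab E] := MVT_segment leab (fun x _ => df_f x) (cf a b).
  exists c; split => //; move: cab; rewrite in_itv /= => /andP[ac cb].
  by rewrite !ger0_norm ?subr_ge0 // lerD2r.
have [c cba E] := MVT_segment (ltW ltba) (fun x _ => df_f x) (cf b a).
exists c; split; last by rewrite -[LHS]opprB E -mulrN opprB.
move: cba; rewrite in_itv /= => /andP[bc ca].
by rewrite !ler0_norm ?subr_le0 ?(ltW ltba) // lerN2 lerD2r.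
Qed.

Section directional_derivative.
Context {R : realType} {V : normedModType R}.
Implicit Types (g : V -> R) (u v w y : V).

Let line_quotient g w y s :
  (fun h : R => h^-1 *: ((g \o shift (s *: w + y)) (h *: w) - g (s *: w + y))) =
  (fun h => h^-1 *: (((fun t => g (t *: w + y)) \o shift s) (h *: 1) - g (s *: w + y))).
Proof.
by apply/funext => h /=; rewrite [h *: 1]mulr1 scalerDl addrA.
Qed.

Lemma is_derive_line g u y s : derivable g (s *: u + y) u ->
  is_derive s (1 : R) (fun t => g (t *: u + y)) ('D_u g (s *: u + y)).
Proof.
move=> dg; split; first by rewrite /derivable -line_quotient.
by rewrite /derive -line_quotient.
Qed.

Lemma is_derive_dirZ g y v k : derivable g y v -> is_derive y (k *: v) g (k * 'D_v g y).
Proof.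
move=> dg; pose phi t := g (t *: v + y).
have phiE h : (phi \o shift 0) (h *: k) = (g \o shift y) (h *: (k *: v)).
  by rewrite /phi /= addr0 scalerA.
have phi0 : phi 0 = g y by rewrite /phi scale0r add0r.
have quotE : (fun h : R => h^-1 *: ((phi \o shift 0) (h *: k) - phi 0)) =
    (fun h : R => h^-1 *: ((g \o shift y) (h *: (k *: v)) - g y)).
  by apply/funext => h; rewrite phiE phi0.
have [dphi Dphi] : is_derive (0:R) (1:R) phi ('D_v g y).
  by have := @is_derive_line g v y 0; rewrite scale0r add0r; apply.
have /derivable1_diffP diff_phi := dphi.
have dphik : derivable phi 0 k by exact: diff_derivable diff_phi.
split; first by rewrite /derivable -quotE.
have -> : 'D_(k *: v) g y = 'D_k phi 0 by rewrite /derive -quotE.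
rewrite -Dphi !deriveE // -[k in LHS]mulr1 -[k * 1]/(k *: (1:R)).
by rewrite linearZ.
Qed.

Lemma is_derive_dirD g u w z (Du : V -> R) :
  (forall y, is_derive y u g (Du y)) -> continuous Du -> derivable g z w ->
  is_derive z (u + w) g (Du z + 'D_w g z).
Proof.
move=> dgu cDu dgw.
pose A h := h^-1 *: (g (h *: u + (h *: w + z)) - g (h *: w + z)).
pose B h := h^-1 *: ((g \o shift z) (h *: w) - g z).
have splitAB : (fun h : R => h^-1 *: ((g \o shift z) (h *: (u + w)) - g z)) = A + B.
  apply/funext => h; rewrite /A /B /= -[RHS]scalerDr; congr (_ *: _).
  by rewrite [in RHS]addrA subrK scalerDr addrA.
suff cvgA : A @ 0^' --> Du z.
  have cvgAB : (A + B) @ 0^' --> Du z + 'D_w g z by apply: cvgD.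
  split; first by rewrite /derivable splitAB; exact: cvgP cvgAB.
  by rewrite /derive splitAB; exact: cvg_lim.
apply/cvgrPdist_lt => e e0.
have /nbhs_normP[d /= d0 near_Du] : \forall t \near z, `|Du z - Du t| < e.
  by move/cvgrPdist_lt: (cDu z); apply.
pose S := `|u| + `|w| + 1.
have S0 : 0 < S by rewrite /S ltr_pwDr // addr_ge0.
near=> h.
have h0 : h != 0 by near: h; exact: nbhs_dnbhs_neq.
have hS : `|h| * S < d.
  rewrite -ltr_pdivlMr //; near: h; exists (d / S) => /=; first by rewrite divr_gt0.
  by move=> t; rewrite /ball /= sub0r normrN.
(* mean value theorem on the line through [h *: w + z] in direction [u] *)
have [c [hc Ac]] : exists c, `|c| <= `|h| /\ A h = Du (c *: u + (h *: w + z)).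
  pose y := h *: w + z.
  have dline t : is_derive t (1 : R) (fun t => g (t *: u + y)) (Du (t *: u + y)).
    by have [dgut <-] := dgu (t *: u + y); exact: is_derive_line.
  have [c [hc E]] := MVT_between 0 h dline.
  exists c; move: hc E; rewrite !subr0 scale0r add0r /A -/y => hc ->.
  by split; last by rewrite [_ *: _]mulrC mulfK.
rewrite Ac; apply: near_Du; rewrite /ball_ /= addrA opprD addrCA subrr addr0 normrN.
apply: le_lt_trans hS; apply: (le_trans (ler_normD _ _)); rewrite !normrZ /S.
by rewrite !mulrDr mulr1 -addrA lerD ?ler_wpM2r // lerDl.
Unshelve. all: by end_near.
Qed.

End directional_derivative.

Section partial_derivatives.
Context {R : realType} {p : nat}.
Variable g : 'rV[R]_p -> R.
Hypothesis g_partial : forall (a : 'I_p) y, derivable g y (ebasis R a).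
Hypothesis partial_continuous : forall a : 'I_p, continuous (dpartial a g).

Lemma is_derive_partial_sum (v z : 'rV[R]_p) :
  is_derive z v g (\sum_(a < p) v ord0 a * dpartial a g z).
Proof.
rewrite [v in is_derive _ v](row_sum_delta v).
elim: (index_enum 'I_p) z => [|a s IH] z; first by rewrite !big_nil; exact: is_derive0.
rewrite !big_cons; have [dgs <-] := IH z.
apply: (is_derive_dirD (Du := fun y => v ord0 a * dpartial a g y)) => //.
  by move=> y; apply: is_derive_dirZ; exact: g_partial.
by move=> y; apply: continuousM; [exact: cst_continuous | exact: partial_continuous].
Qed.

Lemma is_derive_ray (x : 'rV[R]_p) (t : R) :
  is_derive t (1 : R) (fun t => g (t *: x)) (\sum_(a < p) xcoord a x * dpartial a g (t *: x)).
Proof.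
have [dgx Dgx] := is_derive_partial_sum x (t *: x).
rewrite -Dgx -[t *: x]addr0.
under eq_fun do rewrite -[_ *: x]addr0.
by apply: is_derive_line; rewrite addr0.
Qed.

End partial_derivatives.

Section euler_ode.
Context {R : realType}.
Variables phi dphi : R -> R.
Hypothesis phi_derive : forall t, is_derive t (1 : R) phi (dphi t).

Lemma euler_ode_S k : (forall t, t * dphi t + k.+1%:R * phi t = phi t) ->
  phi 1 = 0 ^+ k * phi 0.
Proof.
move=> ode; pose psi t := t ^+ k * phi t.
pose dpsi t := t ^+ k * dphi t + phi t * (k%:R * t ^+ k.-1).
have psi_derive t : is_derive t (1 : R) psi (dpsi t).
  have dX : is_derive t (1 : R) (fun t => t ^+ k) (k%:R * t ^+ k.-1).
    by split; [exact: exprn_derivable | rewrite exp_derive [_ *: 1]mulr1].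
  exact: (is_deriveM dX (phi_derive t)).
have dpsi0 t : t != 0 -> dpsi t = 0.
  move=> t0; apply: (mulfI t0); rewrite mulr0 /dpsi mulrDr mulrCA.
  have -> : t * (phi t * (k%:R * t ^+ k.-1)) = t ^+ k * (k%:R * phi t).
    by case: k {ode psi dpsi psi_derive} => [|k]; rewrite ?mul0r ?mulr0 // exprS /=; ring.
  have odek : t * dphi t + k%:R * phi t = 0.
    by apply: (addIr (phi t)); rewrite add0r -[RHS]ode -natr1; ring.
  by rewrite -mulrDr odek mulr0.
have psi_continuous : {within `[0, 1], continuous psi}.
  by apply: derivable_within_continuous => t _; case: (psi_derive t).
have [c c01] := MVT ltr01 (fun t _ => psi_derive t) psi_continuous.
rewrite dpsi0 ?mul0r; last by move: c01; rewrite in_itv /= => /andP[/gt_eqF ->].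
by move/eqP; rewrite subr_eq0 /psi expr1n mul1r => /eqP.
Qed.

Lemma euler_ode_0 : (forall t, t * dphi t = phi t) -> phi 1 = dphi 0.
Proof.
move=> ode.
have phi0 : phi 0 = 0 by rewrite -ode mul0r.
have ratio_derive t : t != 0 -> is_derive t (1 : R) (fun t => t^-1 * phi t) 0.
  move=> t0; have dinv := is_deriveV t0 (is_derive_id t (1 : R)).
  apply: (is_derive_eq (is_deriveM dinv (phi_derive t))).
  rewrite /= -[phi t]ode.
  by change (t^-1 * dphi t + t * dphi t * (- t ^- 2 * 1) = 0); field.
have ratio_const s : 0 < s < 1 -> phi s = s * phi 1.
  case/andP=> s0 s1; pose rho t := t^-1 * phi t.
  have neq0 t : s <= t -> t != 0 by move/(lt_le_trans s0)/lt0r_neq0.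
  have rho_continuous : {within `[s, 1], continuous rho}.
    apply: derivable_within_continuous => t; rewrite in_itv /= => /andP[/neq0 t0 _].
    by have [] := ratio_derive t t0.
  have rho_derive t : t \in `]s, 1[%R -> is_derive t (1 : R) rho 0.
    by rewrite in_itv /= => /andP[/ltW/neq0 t0 _]; exact: ratio_derive.
  have [c _] := MVT s1 rho_derive rho_continuous.
  move/eqP; rewrite mul0r subr_eq0 /rho invr1 mul1r => /eqP ->.
  by rewrite mulVKf // gt_eqF.
have quotient_cst : \forall h \near 0^'+, h^-1 *: ((phi \o shift 0) (h *: 1) - phi 0) = phi 1.
  near=> h; rewrite /= addr0 [h *: 1]mulr1 phi0 subr0 ratio_const ?[_ *: _]mulKf ?gt_eqF //.
  by apply/andP; split; near: h; [exact: nbhs_right_gt | exact: nbhs_right_lt].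
have [dphi0 <-] := phi_derive 0.
by rewrite /derive (cvg_at_rightE _ _ dphi0) (lim_near_cst (@norm_hausdorff _ _) quotient_cst).
Unshelve. all: by end_near.
Qed.

End euler_ode.

(* [euler_eq g k] says that [g] is homogeneous of degree [1 - k]: it is the equation satisfied
   by the coefficient of a monomial of total degree [k] in a function of weight 1. *)
Definition euler_eq {R : realType} {p : nat} (g : 'rV[R]_p -> R) (k : nat) : Prop :=
  forall y, \sum_(a < p) xcoord a y * dpartial a g y + k%:R * g y = g y.

Section euler_eq.
Context {R : realType} {p : nat}.
Variable g : 'rV[R]_p -> R.
Hypothesis g_smooth : smooth g.

Let ray_derive (x : 'rV[R]_p) t :
  is_derive t (1 : R) (fun t => g (t *: x)) (\sum_(a < p) xcoord a x * dpartial a g (t *: x)).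
Proof.
by apply: is_derive_ray => [a y|a]; [exact: (g_smooth [::]).2 | exact: (g_smooth [:: a]).1].
Qed.

Let ray_euler k (x : 'rV[R]_p) t : euler_eq g k ->
  t * (\sum_(a < p) xcoord a x * dpartial a g (t *: x)) + k%:R * g (t *: x) = g (t *: x).
Proof.
move=> g_euler; rewrite -[RHS]g_euler mulr_sumr; congr (_ + _).
by apply: eq_bigr => a _; rewrite /xcoord mxE mulrA.
Qed.

Lemma euler_eq_S_eq k (x : 'rV[R]_p) : euler_eq g k.+1 -> g x = 0 ^+ k * g 0.
Proof.
move=> g_euler; have := euler_ode_S (ray_derive x) (k := k); rewrite scale1r scale0r.
by apply=> t; exact: ray_euler.
Qed.

Lemma euler_eq_0_eq (x : 'rV[R]_p) : euler_eq g 0 ->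
  g x = \sum_(a < p) xcoord a x * dpartial a g 0.
Proof.
move=> g_euler; have := euler_ode_0 (ray_derive x); rewrite scale1r scale0r; apply=> t.
by have := ray_euler x t g_euler; rewrite mul0r addr0.
Qed.

End euler_eq.

Definition total_deg (N : nat) (m : expo N) : nat := \sum_(b < N) m b.

Section exponents.
Variable N : nat.
Implicit Types (m : expo N) (al : 'I_N).

Lemma total_deg_eq0 m : (total_deg m == 0)%N = (m == expo0 N).
Proof.
rewrite /total_deg sum_nat_eq0; apply/forallP/eqP => [m0|-> b]; last by rewrite ffunE.
by apply/ffunP => b; rewrite ffunE; apply/eqP; have := m0 b.
Qed.

Lemma total_deg_unit al : total_deg (expo_unit al) = 1%N.
Proof.
rewrite /total_deg (bigD1 al) //= ffunE eqxx big1 // => b /negbTE nb.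
by rewrite ffunE nb.
Qed.

Lemma total_deg_eq1 m : total_deg m = 1%N -> exists al, m = expo_unit al.
Proof.
rewrite /total_deg => m1.
have [al m_al|m0] := pickP (fun al => 0 < m al)%N; last first.
  by move: m1; rewrite big1 // => b _; apply/eqP; rewrite -leqn0 leqNgt m0.
exists al; move: m1; rewrite (bigD1 al) //= => m1.
have m_al1 : m al = 1%N by lia.
move: m1; rewrite m_al1 => /eqP; rewrite -[X in _ == X]addn0 eqn_add2l sum_nat_eq0.
move=> /forallP m_other; apply/ffunP => b; rewrite ffunE.
case: eqVneq => [->|nb] //; apply/eqP.
by have := m_other b; rewrite nb.
Qed.

Lemma expo_unit_inj : injective (@expo_unit N).
Proof.
by move=> al be /ffunP /(_ al); rewrite !ffunE eqxx; case: eqVneq.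
Qed.

Lemma expo_decK m al : (0 < m al)%N -> expo_inc (expo_dec m al) al = m.
Proof.
by move=> m_al; apply/ffunP => b; rewrite !ffunE; case: eqVneq => [->|]; rewrite ?prednK.
Qed.

Lemma ksign_expo_dec n (deg : 'I_N -> z2deg n) m al :
  ksign deg (expo_dec m al) al = ksign deg m al.
Proof.
apply: eq_bigr => b b_al.
have b_neq_al : b != al by rewrite -val_eqE /= ltn_eqF.
by rewrite ffunE (negbTE b_neq_al).
Qed.

End exponents.

Section euler_field.
Context {R : realType} {n p N : nat}.
Variable deg : 'I_N -> z2deg n.
Implicit Types (f : zfun R p N) (m : expo N).

(* The Koszul signs of [xi^al] and [d/dxi^al] cancel, so [xi^al d/dxi^al] multiplies the
   coefficient of [xi^m] by [m al]. *)
Lemma euler_coef f m x : valid_expo deg m ->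
  euler deg f m x = \sum_(a < p) xcoord a x * dpartial a (f m) x + (total_deg m)%:R * f m x.
Proof.
move=> vm; congr (_ + _); rewrite /total_deg natr_sum mulr_suml.
apply: eq_bigr => al _; rewrite /mul_xi /dxi vm andbT.
have [->|m_al] := posnP (m al); first by rewrite mul0r.
rewrite ksign_expo_dec expo_decK // ffunE eqxx prednK // !mulrA -exprMn mulrNN mulr1.
by rewrite expr1n mul1r.
Qed.

Lemma euler_eq_coef f m : euler deg f = f -> valid_expo deg m ->
  euler_eq (f m) (total_deg m).
Proof. by move=> f_euler vm x; rewrite -euler_coef // f_euler. Qed.

Lemma valid_expo0 : valid_expo deg (expo0 N).
Proof. by apply/forallP => al; apply/implyP; rewrite ffunE. Qed.

Lemma valid_expo_unit al : valid_expo deg (expo_unit al).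
Proof. by apply/forallP => b; apply/implyP; rewrite ffunE; case: (b == al). Qed.

End euler_field.

Section linear_zfun.
Context {R : realType} {p N : nat}.
Variables (F : 'I_p -> R) (G : 'I_N -> R).

Lemma linear_zfun_expo0 x : linear_zfun F G (expo0 N) x = \sum_(a < p) F a * xcoord a x.
Proof.
rewrite /linear_zfun eqxx [X in _ + X]big1 ?addr0 // => al _.
by rewrite eq_sym -total_deg_eq0 total_deg_unit.
Qed.

Lemma linear_zfun_unit al x : linear_zfun F G (expo_unit al) x = G al.
Proof.
rewrite /linear_zfun -total_deg_eq0 total_deg_unit add0r (bigD1 al) //= eqxx big1 ?addr0 //.
by move=> be /negbTE be_al; rewrite (inj_eq (@expo_unit_inj _)) eq_sym be_al.
Qed.

Lemma linear_zfun_eq0 m x : m != expo0 N -> (forall al, m != expo_unit al) ->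
  linear_zfun F G m x = 0.
Proof.
move=> /negbTE m_neq0 m_unit; rewrite /linear_zfun m_neq0 add0r big1 // => al _.
by rewrite (negbTE (m_unit al)).
Qed.

End linear_zfun.

Theorem proposition4p4 (R : realType) (n p N : nat) (deg : 'I_N -> z2deg n)
  (f : zfun R p N) :
  (1 <= n)%N ->
  (forall al : 'I_N, deg al != [ffun => false]) ->
  is_zfun deg f ->
  euler deg f = f ->
  exists (F : 'I_p -> R) (G : 'I_N -> R), f = linear_zfun F G.
Proof.
move=> _ _ f_zfun f_euler.
exists (fun a => dpartial a (f (expo0 N)) 0), (fun al => f (expo_unit al) 0).
apply/funext => m; apply/funext => x.
have [vm|invalid_m] := boolP (valid_expo deg m); last first.
  rewrite (f_zfun m).2 // linear_zfun_eq0 //.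
    by apply: contraNneq invalid_m => ->; exact: valid_expo0.
  by move=> al; apply: contraNneq invalid_m => ->; exact: valid_expo_unit.
have m_smooth := (f_zfun m).1 vm; have m_euler := euler_eq_coef f_euler vm.
case m_deg : (total_deg m) m_euler => [|[|k]] m_euler.
- move/eqP: m_deg; rewrite total_deg_eq0 => /eqP m0; subst m.
  by rewrite linear_zfun_expo0 (euler_eq_0_eq m_smooth x m_euler); under eq_bigr do rewrite mulrC.
- have [al m_unit] := total_deg_eq1 m_deg; subst m.
  by rewrite linear_zfun_unit (euler_eq_S_eq m_smooth x m_euler) expr0 mul1r.
- rewrite (euler_eq_S_eq m_smooth x m_euler) expr0n mul0r linear_zfun_eq0 //.
    by rewrite -total_deg_eq0 m_deg.
  by move=> al; apply/eqP => m_unit; move: m_deg; rewrite m_unit total_deg_unit.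
Qed.
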